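(* Consider the data-selling model described in the context, with $n$ buyers, and assume $z_0<\frac{1}{2\sqrt{\gamma}}\cdot\frac{n+1}{2n+1}$. Let $G$ be a core-periphery network on $N$ with periphery $P$, $|P|=m$, and core $K=N\setminus P$, $|K|=n-m$. Evaluate the payoffs on $G$ at the optimal contract whose target set is $P$. Then $G$ is Pareto-efficient among networks on $N$ with $n$ nodes: there is no network $G'$ on $N$ and optimal contract $C'$ for $G'$ such that - the seller's optimal profit under $G'$ is at least that under $G$, and - every buyer's expected payoff under $(G',C')$ is at least his payoff under $G$, with strict inequality for at least one buyer.
   Context: Model. There is a finite set of buyers $N=\{1,\dots,n\}$ and an undirected network $G$ on $N$; $N_i$ is the set of neighbors of $i$. A state $\theta\sim N(0,1/z_0)$ with $z_0>0$ is unknown to all. A contract $C$ consists of a target set $M(C)\subseteq N$, a common precision $z>0$, and prices $p_i\ge0$ for $i\in M(C)$. Each $i\in M(C)$ receives a signal $s_i=\theta+\varepsilon_i$, with $\varepsilon_i\sim N(0,1/z)$ independent. Each buyer observes the signals of his neighbors in $M(C)$ (and his own if he is in $M(C)$) and chooses $a_i$ to maximize $E[-(a_i-\theta)^2]$. With $m_i=|N_i\cap M(C)|$, buyer $i\in M(C)$ gets expected payoff $-\frac{1}{z_0+(m_i+1)z}-p_i$, and buyer $i\notin M(C)$ gets $-\frac{1}{z_0+m_iz}$. Buyer $i\in M(C)$ accepts iff $p_i\le \frac{1}{z_0+m_iz}-\frac{1}{z_0+(m_i+1)z}$. A contract is feasible if all $i\in M(C)$ accept. The seller's profit is $\sum_{i\in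 M(C)}p_i-\gamma z$ with $\gamma>0$. An optimal contract is a feasible contract maximizing the seller's profit. A core-periphery network with core $K$ and periphery $P$ (a partition of $N$) is one in which each core node is linked to every other node, and no two periphery nodes are linked. *)

From HB Require Import structures.
From mathcomp Require Import all_boot all_order all_algebra.
From mathcomp Require Import reals.
Set Implicit Arguments. Unset Strict Implicit. Unset Printing Implicit Defensive.
Import Order.TTheory GRing.Theory Num.Theory.
Local Open Scope ring_scope.

(* Buyers are N = 'I_n.  A network is an undirected simple graph:
   a symmetric irreflexive relation on 'I_n. *)
Definition is_network (n : nat) (G : rel 'I_n) : Prop :=
  irreflexive G /\ symmetric G.

Definition core_periphery (n : nat) (G : rel 'I_n) (P : {set 'I_n}) : Prop :=
  (forall k j : 'I_n, k \in ~: P -> j != k -> G k j) /\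
  (forall i j : 'I_n, i \in P -> j \in P -> ~~ G i j).

(* A contract: target set M, common precision z, prices p
   (only the values p i for i in M are meaningful). *)
Record contract (R : realType) (n : nat) := Contract {
  target : {set 'I_n};
  prec : R;
  price : 'I_n -> R }.

Section Model.
Variables (R : realType) (n : nat) (z0 gamma : R).

Definition nbrs_in (G : rel 'I_n) (C : contract R n) (i : 'I_n) : nat :=
  #|[set j in target C | G i j]|.

Definition accepts (G : rel 'I_n) (C : contract R n) (i : 'I_n) : Prop :=
  let m := (nbrs_in G C i)%:R in
  price C i <= 1 / (z0 + m * prec C) - 1 / (z0 + (m + 1) * prec C).

Definition feasible (G : rel 'I_n) (C : contract R n) : Prop :=
  0 < prec C /\
  (forall i, i \in target C -> 0 <= price C i /\ accepts G C i).

Definition profit (C : contract R n) : R :=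
  \sum_(i in target C) price C i - gamma * prec C.

Definition optimal (G : rel 'I_n) (C : contract R n) : Prop :=
  feasible G C /\ (forall C' : contract R n, feasible G C' -> profit C' <= profit C).

Definition payoff (G : rel 'I_n) (C : contract R n) (i : 'I_n) : R :=
  let m := (nbrs_in G C i)%:R in
  if i \in target C then - (1 / (z0 + (m + 1) * prec C)) - price C i
  else - (1 / (z0 + m * prec C)).

Definition pareto_dominates (G' : rel 'I_n) (C' : contract R n)
    (G : rel 'I_n) (C : contract R n) : Prop :=
  profit C <= profit C' /\
  (forall i, payoff G C i <= payoff G' C' i) /\
  (exists i, payoff G C i < payoff G' C' i).

End Model.

From mathcomp Require Import all_boot all_order all_algebra.
From mathcomp Require Import reals.
From mathcomp Require Import ring lra.
Import Order.TTheory GRing.Theory Num.Theory.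
Set Implicit Arguments.
Unset Strict Implicit.
Unset Printing Implicit Defensive.
Local Open Scope ring_scope.

(* A targeted buyer who sees d other targeted signals pays, at an optimum, exactly
   his drop in posterior variance 1/(z0 + d z) - 1/(z0 + (d + 1) z).  When z0 is
   small this drop decays faster than 1/(d + 1), so by the Caro-Wei bound
   sum_i 1/(d_i + 1) <= alpha(G) the seller earns strictly more by selling to an
   independent set: every optimal contract targets an independent set.
   On a core-periphery network targeted at P, a competitor that leaves every
   buyer at least as well off cannot target a core buyer (he would lose the |P|
   signals he sees), so it targets a subset of P; matching the profit forces it
   to target all of P, and strict concavity of y |-> |P| (1/z0 - 1/(z0 + y)) - gamma y
   forces the same precision.  Then no buyer's payoff can strictly increase. *)

Section SignalValue.
Variable R : realFieldType.
Implicit Types a d x y z : R.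

Lemma ler_pdiv_cross (p q x y : R) : 0 < x -> 0 < y -> p * y <= q * x -> p / x <= q / y.
Proof. by move=> x_gt0 y_gt0 h; rewrite ler_pdivrMr // mulrAC ler_pdivlMr. Qed.

Lemma ltr_pdiv_cross (p q x y : R) : 0 < x -> 0 < y -> p * y < q * x -> p / x < q / y.
Proof. by move=> x_gt0 y_gt0 h; rewrite ltr_pdivrMr // mulrAC ltr_pdivlMr. Qed.

(* The drop in posterior variance caused by one more signal of precision [z]
   for a buyer who already sees [d] of them: the highest price he accepts. *)
Definition signal_value a d z := 1 / (a + d * z) - 1 / (a + (d + 1) * z).

Lemma signal_value0 a z : signal_value a 0 z = 1 / a - 1 / (a + z).
Proof. by rewrite /signal_value mul0r addr0 add0r (mul1r z). Qed.

Lemma signal_valueE a d z : 0 < a -> 0 <= d -> 0 < z ->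
  signal_value a d z = z / ((a + d * z) * (a + (d + 1) * z)).
Proof.
move=> a_gt0 d_ge0 z_gt0; rewrite /signal_value; field.
by apply/andP; split; rewrite gt_eqF //; nra.
Qed.

Lemma signal_value_gt0 a d z : 0 < a -> 0 <= d -> 0 < z -> 0 < signal_value a d z.
Proof.
move=> a_gt0 d_ge0 z_gt0; rewrite signal_valueE //.
by apply: divr_gt0 => //; apply: mulr_gt0; nra.
Qed.

Lemma signal_value_lt_share a d z : 0 < a -> 1 <= d -> a < 2 * z ->
  signal_value a d z < signal_value a 0 z * (1 / (d + 1)).
Proof.
move=> a_gt0 d_ge1 lt_a_2z; have z_gt0 : 0 < z by lra.
rewrite !signal_valueE //; last lra.
have -> : z / ((a + 0 * z) * (a + (0 + 1) * z)) * (1 / (d + 1))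
          = z / (a * (a + z) * (d + 1)).
  by field; apply/and3P; split; rewrite gt_eqF //; nra.
apply: ltr_pdiv_cross; [apply: mulr_gt0; nra | by rewrite !pmulr_rgt0 //; lra |].
have cubic_gt0 : 0 < z * d * ((d + 1) * z ^+ 2 + a * z - a ^+ 2).
  by rewrite !pmulr_rgt0 //; nra.
have -> : z * ((a + d * z) * (a + (d + 1) * z)) =
          z * (a * (a + z) * (d + 1)) + z * d * ((d + 1) * z ^+ 2 + a * z - a ^+ 2).
  by ring.
lra.
Qed.

Lemma signal_value_le_share a z (d : nat) : 0 < a -> a < 2 * z ->
  signal_value a d%:R z <= signal_value a 0 z * (1 / (d%:R + 1)).
Proof.
move=> a_gt0 lt_a_2z; case: d => [|d].
  by rewrite add0r divr1 mulr1.
by apply/ltW/signal_value_lt_share; rewrite ?ler1n.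
Qed.

Lemma signal_value_le_low_prec a z (d : nat) : 0 < a -> 0 < z -> 2 * z <= a ->
  signal_value a d%:R z <= 2 / (5 * a) * (1 / (d%:R + 1)).
Proof.
move=> a_gt0 z_gt0 le_2z_a; set e : R := d%:R.
have e_ge0 : 0 <= e by [].
rewrite signal_valueE //.
have -> : 2 / (5 * a) * (1 / (e + 1)) = 2 / (5 * a * (e + 1)).
  by field; apply/andP; split; rewrite gt_eqF //; nra.
apply: ler_pdiv_cross; [apply: mulr_gt0; nra | by rewrite !pmulr_rgt0 //; lra |].
have [->|e_ge1] : e = 0 \/ 1 <= e.
    by rewrite /e; case: (d) => [|d']; [left | right; rewrite ler1n].
  by rewrite !mul0r addr0 add0r !mul1r; nra.
(* Sum of squares certificate for [5 a z (e + 1) <= 2 (a + e z) (a + (e + 1) z)]. *)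
have sq1 : 0 <= (4 * a - (e + 3) * z) ^+ 2 by apply: sqr_ge0.
have sq2 : 0 <= (15 * e ^+ 2 + 10 * e - 9) * z ^+ 2 by rewrite mulr_ge0 ?sqr_ge0 //; nra.
have : 8 * (2 * ((a + e * z) * (a + (e + 1) * z)) - z * (5 * a * (e + 1))) =
       (4 * a - (e + 3) * z) ^+ 2 + (15 * e ^+ 2 + 10 * e - 9) * z ^+ 2 by ring.
lra.
Qed.

Lemma signal_value0_midpoint_concave {a x x'} : 0 < a -> 0 < x -> x < x' ->
  (signal_value a 0 x + signal_value a 0 x') / 2 < signal_value a 0 ((x + x') / 2).
Proof.
move=> a_gt0 x_gt0 lt_xx'; rewrite !signal_value0.
have -> : 1 / (a + (x + x') / 2) = 2 / ((a + x) + (a + x')).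
  by field; rewrite gt_eqF //; lra.
suff : 2 / ((a + x) + (a + x')) < (1 / (a + x) + 1 / (a + x')) / 2 by lra.
have -> : (1 / (a + x) + 1 / (a + x')) / 2
          = ((a + x) + (a + x')) / (2 * ((a + x) * (a + x'))).
  by field; apply/andP; split; rewrite gt_eqF //; lra.
apply: ltr_pdiv_cross; [lra | by rewrite !pmulr_rgt0 //; lra | nra].
Qed.

Lemma flat_profit_argmax_unique (a g k z z' : R) : 0 < a -> 0 < k -> 0 < z -> 0 < z' ->
  (forall y, 0 < y -> k * signal_value a 0 y - g * y <= k * signal_value a 0 z - g * z) ->
  k * signal_value a 0 z - g * z <= k * signal_value a 0 z' - g * z' -> z' = z.
Proof.
move=> a_gt0 k_gt0 z_gt0 z'_gt0 z_max le_zz'.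
have mid_gt x x' : 0 < x -> x < x' ->
    (k * signal_value a 0 x - g * x + (k * signal_value a 0 x' - g * x')) / 2
    < k * signal_value a 0 ((x + x') / 2) - g * ((x + x') / 2).
  move=> x_gt0 lt_xx'.
  have := signal_value0_midpoint_concave a_gt0 x_gt0 lt_xx'.
  rewrite -(ltr_pM2l k_gt0); lra.
have mid_gt0 : 0 < (z + z') / 2 by lra.
have := z_max _ mid_gt0; case: (ltgtP z z') => [lt_zz'|lt_z'z|//] le_mid; exfalso.
  by have := mid_gt _ _ z_gt0 lt_zz'; lra.
by have := mid_gt _ _ z'_gt0 lt_z'z; rewrite [z' + z]addrC; lra.
Qed.

End SignalValue.

Lemma small_z0_bound (R : rcfType) (n : nat) (z0 gamma : R) :
  0 < z0 -> 0 < gamma -> (0 < n)%N ->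
  z0 < 1 / (2 * Num.sqrt gamma) * ((n%:R + 1) / (2 * n%:R + 1)) ->
  gamma * z0 ^+ 2 < 1 / 9.
Proof.
move=> z0_gt0 gamma_gt0 n_gt0; set s := Num.sqrt gamma => small.
have s_gt0 : 0 < s by rewrite sqrtr_gt0.
have n_ge1 : 1 <= n%:R :> R by rewrite ler1n.
have ratio_le : (n%:R + 1) / (2 * n%:R + 1) <= 2 / 3 :> R by rewrite ler_pdivrMr; lra.
have : z0 * s < 1 / 3.
  rewrite -ltr_pdivlMr //; apply: (lt_le_trans small).
  have -> : 1 / 3 / s = 1 / (2 * s) * (2 / 3) by field; rewrite gt_eqF.
  by rewrite ler_wpM2l // divr_ge0 //; lra.
rewrite -(sqr_sqrtr (ltW gamma_gt0)) -/s.
have : 0 <= z0 * s by rewrite mulr_ge0 // ltW.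
nra.
Qed.

Section IndependentSets.
Variables (T : finType) (G : rel T).

Definition deg_in (M : {set T}) (i : T) : nat := #|[set j in M | G i j]|.

Definition independent (I : {set T}) : Prop :=
  forall i j, i \in I -> j \in I -> ~~ G i j.

Lemma independentP (I : {set T}) :
  independent I <-> forall i, i \in I -> deg_in I i = 0%N.
Proof.
split=> [indI i iI | deg0 i j iI jI].
  apply/eqP; rewrite cards_eq0; apply/eqP/setP => j; rewrite !inE.
  by apply/negbTE/andP => -[jI]; apply/negP/indI.
apply/negP => Gij; move/eqP: (deg0 i iI); rewrite cards_eq0 => /eqP/setP/(_ j).
by rewrite !inE jI Gij.
Qed.

Hypotheses (G_irr : irreflexive G) (G_sym : symmetric G).

(* Caro-Wei: greedily pick a vertex of minimum degree and delete its closed neighbourhood. *)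
Lemma caro_wei (R : numFieldType) (M : {set T}) :
  exists2 I : {set T}, I \subset M /\ independent I &
    \sum_(i in M) 1 / ((deg_in M i)%:R + 1) <= #|I|%:R :> R.
Proof.
elim: {M}_.+1 {-2}M (ltnSn #|M|) => // k IH M.
case: (set_0Vmem M) => [-> _|[v0 v0M] M_le].
  by exists set0; [split=> [|i j]; rewrite ?sub0set ?inE | rewrite big_set0 cards0].
have weight_anti (a b : nat) : (a <= b)%N -> 1 / (b%:R + 1) <= 1 / (a%:R + 1) :> R.
  by move=> le_ab; rewrite !div1r lef_pV2 ?posrE ?ltr_wpDl // lerD2r ler_nat.
have [v vM v_min] := arg_minnP (deg_in M) v0M.
set N := [set j in M | G v j].
set M' := M :\: (v |: N).
have vN : v \notin N by rewrite inE G_irr andbF.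
have M'_lt : (#|M'| < k)%N.
  rewrite -ltnS; apply: leq_trans M_le; rewrite ltnS; apply: proper_card.
  by apply/properP; split; [exact: subsetDl | exists v; rewrite // !inE eqxx].
have [I [IM' indI] sumI] := IH M' M'_lt.
have vG_I j : j \in I -> ~~ G v j.
  by move=> /(subsetP IM'); rewrite !inE negb_or => /andP[/andP[_]]; case: (j \in M).
have vI : v \notin I by apply/negP => /(subsetP IM'); rewrite !inE eqxx.
exists (v |: I).
  split.
    by apply/subsetP => j /setU1P[-> //|/(subsetP IM')/setDP[]].
  move=> i j /setU1P[->|iI] /setU1P[->|jI].
  - by rewrite G_irr.
  - exact: vG_I.
  - by rewrite G_sym vG_I.
  - exact: indI.
have vN_M : v |: N \subset M by apply/subsetP => j /setU1P[-> //|]; rewrite inE => /andP[].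
rewrite cardsU1 vI natrD (big_setID (v |: N)) (setIidPr vN_M) /= lerD //.
  (* Each of the deg(v) + 1 removed vertices contributes at most 1 / (deg v + 1). *)
  apply: le_trans (_ : \sum_(j in v |: N) 1 / ((deg_in M v)%:R + 1) <= _).
    by apply: ler_sum => j jvN; apply/weight_anti/v_min/(subsetP vN_M).
  rewrite sumr_const cardsU1 vN -[X in X <= _]mulr_natr addnC natrD div1r mulVf //.
  by rewrite gt_eqF // ltr_wpDl.
apply: le_trans sumI; apply: ler_sum => j _; apply/weight_anti.
by apply/subset_leq_card/subsetP => x; rewrite !inE => /andP[/andP[_ ->] ->].
Qed.

End IndependentSets.

Section SumSignalValue.
Variables (R : realFieldType) (T : finType) (M : {set T}) (d : T -> nat).

Local Notation weight := (\sum_(i in M) 1 / ((d i)%:R + 1) : R).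

Lemma sum_signal_value_lt_share (a z : R) (i0 : T) : 0 < a -> a < 2 * z ->
  i0 \in M -> (0 < d i0)%N ->
  \sum_(i in M) signal_value a (d i)%:R z < signal_value a 0 z * weight.
Proof.
move=> a_gt0 lt_a_2z i0M d_gt0; rewrite mulr_sumr (bigD1 i0) // [X in _ < X](bigD1 i0) //=.
rewrite ltr_leD //; first by apply: signal_value_lt_share; rewrite ?ler1n.
by apply: ler_sum => i _; apply: signal_value_le_share.
Qed.

Lemma sum_signal_value_le_low_prec (a z : R) : 0 < a -> 0 < z -> 2 * z <= a ->
  \sum_(i in M) signal_value a (d i)%:R z <= 2 / (5 * a) * weight.
Proof.
by move=> *; rewrite mulr_sumr; apply: ler_sum => i _; apply: signal_value_le_low_prec.
Qed.

Lemma sum_signal_value_lt_flat (a g z : R) (i0 : T) (k : nat) :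
  0 < a -> 0 < g -> 0 < z -> g * a ^+ 2 < 1 / 9 ->
  i0 \in M -> (0 < d i0)%N -> weight <= k%:R ->
  exists2 y, 0 < y &
    \sum_(i in M) signal_value a (d i)%:R z - g * z < k%:R * signal_value a 0 y - g * y.
Proof.
move=> a_gt0 g_gt0 z_gt0 small i0M d_gt0 le_weight_k.
have weight_gt0 : 0 < weight.
  rewrite (bigD1 i0) //=; apply: ltr_pwDl; first by rewrite divr_gt0 ?ltr_wpDl.
  by apply: sumr_ge0 => i _; rewrite divr_ge0 ?addr_ge0.
have k_ge1 : 1 <= k%:R :> R by rewrite ler1n -(ltr0n R); apply: lt_le_trans le_weight_k.
case: (ltrP a (2 * z)) => [lt_a_2z|le_2z_a].
  exists z => //; rewrite ltrD2r.
  apply: (lt_le_trans (sum_signal_value_lt_share a_gt0 lt_a_2z i0M d_gt0)).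
  by rewrite [k%:R * _]mulrC ler_wpM2l // ltW // signal_value_gt0.
(* Otherwise the precision is too low: raising it to [2 a] pays off. *)
exists (2 * a); first by rewrite mulr_gt0.
have -> : signal_value a 0 (2 * a) = 2 / (3 * a).
  by rewrite signal_value0; field; apply/andP; split; rewrite gt_eqF //; lra.
have le_sum := sum_signal_value_le_low_prec a_gt0 z_gt0 le_2z_a.
have le_share : 2 / (5 * a) * weight <= 2 / (5 * a) * k%:R.
  by rewrite ler_wpM2l // divr_ge0 //; lra.
have cost_lt : 2 * g * a < 4 / (15 * a) by rewrite ltr_pdivlMr; nra.
have le_extra : 4 / (15 * a) <= 4 / (15 * a) * k%:R.
  by rewrite ler_peMr // divr_ge0 //; lra.
have -> : k%:R * (2 / (3 * a)) = 2 / (5 * a) * k%:R + 4 / (15 * a) * k%:R.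
  by field; rewrite gt_eqF.
have : 0 < g * z by rewrite mulr_gt0.
lra.
Qed.

End SumSignalValue.

Section OptimalContracts.
Variables (R : realType) (n : nat) (z0 gamma : R).
Hypothesis z0_gt0 : 0 < z0.
Implicit Types (G : rel 'I_n) (C : contract R n) (T : {set 'I_n}).

Definition flat_contract T (y : R) : contract R n :=
  Contract T y (fun=> signal_value z0 0 y).

Lemma flat_contract_feasible G T y : independent G T -> 0 < y ->
  feasible z0 G (flat_contract T y).
Proof.
move=> indT y_gt0; split=> // i iT; split; first exact/ltW/signal_value_gt0.
by rewrite /accepts (_ : nbrs_in _ _ _ = 0%N) //; apply: (independentP _ _).1.
Qed.

Lemma profit_flat_contract T y :
  profit gamma (flat_contract T y) = #|T|%:R * signal_value z0 0 y - gamma * y.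
Proof. by rewrite /profit sumr_const mulr_natl. Qed.

Lemma optimal_ge_flat G C T y : optimal z0 gamma G C -> independent G T -> 0 < y ->
  #|T|%:R * signal_value z0 0 y - gamma * y <= profit gamma C.
Proof.
by move=> [_ C_max] indT y_gt0; rewrite -profit_flat_contract; apply/C_max/flat_contract_feasible.
Qed.

(* Raising every price to the buyer's reservation value keeps the contract feasible. *)
Lemma optimal_price G C : optimal z0 gamma G C ->
  forall i, i \in target C -> price C i = signal_value z0 (nbrs_in G C i)%:R (prec C).
Proof.
move=> [[prec_gt0 C_feas] C_max].
pose full := Contract (target C) (prec C) (fun i => signal_value z0 (nbrs_in G C i)%:R (prec C)).
have full_feas : feasible z0 G full.
  split=> // i _; split; last exact: lexx.
  exact/ltW/signal_value_gt0.
have gap_ge0 i : i \in target C -> 0 <= signal_value z0 (nbrs_in G C i)%:R (prec C) - price C i.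
  by move=> iC; rewrite subr_ge0; case: (C_feas i iC).
have gap_sum0 : \sum_(i in target C)
    (signal_value z0 (nbrs_in G C i)%:R (prec C) - price C i) = 0.
  apply/eqP; rewrite eq_le sumr_ge0 // andbT sumrB subr_le0.
  by have := C_max _ full_feas; rewrite /profit lerD2r.
move=> i iC; apply/eqP; rewrite eq_sym -subr_eq0; apply/eqP.
exact: (psumr_eq0P gap_ge0 gap_sum0).
Qed.

Lemma profit_optimal G C : optimal z0 gamma G C ->
  profit gamma C = \sum_(i in target C) signal_value z0 (nbrs_in G C i)%:R (prec C)
                   - gamma * prec C.
Proof. by move=> optC; rewrite /profit (eq_bigr _ (optimal_price optC)). Qed.

Lemma profit_optimal_independent G C : optimal z0 gamma G C -> independent G (target C) ->
  profit gamma C = #|target C|%:R * signal_value z0 0 (prec C) - gamma * prec C.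
Proof.
move=> optC indC; rewrite (profit_optimal optC) mulr_natl -sumr_const; congr (_ - _).
by apply: eq_bigr => i iC; rewrite (_ : nbrs_in _ _ _ = 0%N) //; apply: (independentP _ _).1.
Qed.

Lemma payoff_optimal G C : optimal z0 gamma G C -> forall i,
  payoff z0 G C i = - (1 / (z0 + (nbrs_in G C i)%:R * prec C)).
Proof.
move=> optC i; rewrite /payoff; case: ifP => // iC.
rewrite (optimal_price optC iC) /signal_value; lra.
Qed.

Lemma optimal_target_neq0 G C : 0 < gamma -> optimal z0 gamma G C -> target C != set0.
Proof.
move=> gamma_gt0 [[prec_gt0 _] C_max]; apply/negP => /eqP C0.
pose halved := Contract (target C) (prec C / 2) (price C).
have halved_feas : feasible z0 G halved by split=> [|i]; rewrite /= ?C0 ?inE //; lra.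
by have := C_max _ halved_feas; rewrite /profit /= C0 big_set0; nra.
Qed.

(* By Caro-Wei, some independent subset of a non-independent target set, sold at
   a suitable precision, earns strictly more. *)
Lemma optimal_target_independent G C :
  0 < gamma -> gamma * z0 ^+ 2 < 1 / 9 -> is_network G ->
  optimal z0 gamma G C -> independent G (target C).
Proof.
move=> gamma_gt0 small [G_irr G_sym] optC; have [[prec_gt0 _] _] := optC.
apply/independentP => i0 i0C; apply/eqP; rewrite -leqn0 leqNgt; apply/negP => deg_gt0.
have [I [_ indI] weight_le] := caro_wei G_irr G_sym R (target C).
have [y y_gt0] := sum_signal_value_lt_flat z0_gt0 gamma_gt0 prec_gt0 small i0C deg_gt0 weight_le.
by rewrite -profit_optimal // ltNge (optimal_ge_flat optC indI y_gt0).
Qed.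

End OptimalContracts.

Section CorePeriphery.
Variables (R : realType) (n : nat) (z0 gamma : R).
Variables (G G' : rel 'I_n) (P : {set 'I_n}) (C C' : contract R n).
Hypotheses (z0_gt0 : 0 < z0) (gamma_gt0 : 0 < gamma).
Hypotheses (cpG : core_periphery G P) (optC : optimal z0 gamma G C) (CP : target C = P).
Hypotheses (optC' : optimal z0 gamma G' C') (indC' : independent G' (target C')).
Hypotheses (profit_le : profit gamma C <= profit gamma C')
           (payoff_le : forall i, payoff z0 G C i <= payoff z0 G' C' i).

Let prec_gt0 : 0 < prec C. Proof. by have [[]] := optC. Qed.
Let prec'_gt0 : 0 < prec C'. Proof. by have [[]] := optC'. Qed.
Let P_gt0 : (0 < #|P|)%N. Proof. by rewrite card_gt0 -CP (optimal_target_neq0 gamma_gt0 optC). Qed.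

Lemma nbrs_in_core k : k \notin P -> nbrs_in G C k = #|P|.
Proof.
move=> kP; rewrite /nbrs_in CP; suff -> : [set j in P | G k j] = P by [].
apply/setP => j; rewrite inE.
case: (boolP (j \in P)) => //= jP; apply: cpG.1; first by rewrite inE.
by apply: contraNneq kP => <-.
Qed.

Lemma competitor_target_sub : target C' \subset P.
Proof.
apply/subsetP => k kC'; apply: contraT => kP.
have := payoff_le k; rewrite (payoff_optimal z0_gt0 optC) (payoff_optimal z0_gt0 optC').
rewrite nbrs_in_core // (_ : nbrs_in _ _ _ = 0%N); last exact: (independentP _ _).1 indC' _ kC'.
have mz_gt0 : 0 < #|P|%:R * prec C by rewrite mulr_gt0 ?ltr0n.
rewrite mul0r addr0 lerN2 !div1r lef_pV2 ?posrE ?addr_gt0 //.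
by rewrite gerDl leNgt mz_gt0.
Qed.

Lemma competitor_target_eq : target C' = P.
Proof.
apply/eqP; rewrite eqEcard competitor_target_sub leqNgt /=; apply/negP => lt_card.
have := profit_le; rewrite (profit_optimal_independent z0_gt0 optC') //.
have := optimal_ge_flat z0_gt0 optC cpG.2 prec'_gt0.
have : #|target C'|%:R * signal_value z0 0 (prec C') < #|P|%:R * signal_value z0 0 (prec C').
  by rewrite ltr_pM2r ?ltr_nat // signal_value_gt0.
lra.
Qed.

Lemma competitor_prec_eq : prec C' = prec C.
Proof.
have P_flat : independent G (target C) by rewrite CP; exact: cpG.2.
apply: (flat_profit_argmax_unique (g := gamma) (k := #|P|%:R) z0_gt0 _ prec_gt0 prec'_gt0).
- by rewrite ltr0n.
- move=> y y_gt0; rewrite -CP -(profit_optimal_independent z0_gt0 optC) //.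
  exact (optimal_ge_flat z0_gt0 optC P_flat y_gt0).
have := profit_le; rewrite (profit_optimal_independent z0_gt0 optC) //.
by rewrite (profit_optimal_independent z0_gt0 optC') // competitor_target_eq CP.
Qed.

Lemma competitor_nbrs_le i : (nbrs_in G' C' i <= nbrs_in G C i)%N.
Proof.
case: (boolP (i \in P)) => iP.
  suff -> : nbrs_in G' C' i = 0%N by [].
  by apply: (independentP _ _).1 indC' _ _; rewrite competitor_target_eq.
rewrite nbrs_in_core // -competitor_target_eq; apply/subset_leq_card/subsetP => j.
by rewrite inE => /andP[].
Qed.

Lemma competitor_payoff_le i : payoff z0 G' C' i <= payoff z0 G C i.
Proof.
have denom_gt0 d : 0 < z0 + d%:R * prec C by rewrite ltr_pwDl // mulr_ge0 // ltW.
rewrite (payoff_optimal z0_gt0 optC) (payoff_optimal z0_gt0 optC') competitor_prec_eq.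
rewrite lerN2 !div1r lef_pV2 ?posrE // lerD2l ler_wpM2r ?ler_nat ?competitor_nbrs_le //.
exact: ltW.
Qed.

End CorePeriphery.

Theorem proposition5 (R : realType) (n : nat) (z0 gamma : R)
  (hz0 : 0 < z0) (hgamma : 0 < gamma)
  (hsmall : z0 < 1 / (2 * Num.sqrt gamma) * ((n%:R + 1) / (2 * n%:R + 1)))
  (G : rel 'I_n) (P : {set 'I_n})
  (hG : is_network G) (hcp : core_periphery G P)
  (C : contract R n) (hC : optimal z0 gamma G C) (hCP : target C = P) :
  ~ (exists (G' : rel 'I_n) (C' : contract R n),
       is_network G' /\ optimal z0 gamma G' C' /\
       pareto_dominates z0 gamma G' C' G C).
Proof.
move=> [G' [C' [netG' [optC' [profit_le [payoff_le [i lt_i]]]]]]].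
have n_gt0 : (0 < n)%N.
  rewrite -(card_ord n); apply: leq_trans (max_card P).
  by rewrite card_gt0 -hCP (optimal_target_neq0 hgamma hC).
have small := small_z0_bound hz0 hgamma n_gt0 hsmall.
have indC' := optimal_target_independent hz0 hgamma small netG' optC'.
have := competitor_payoff_le hz0 hgamma hcp hC hCP optC' indC' profit_le payoff_le i.
by rewrite leNgt lt_i.
Qed.
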